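(* Let $A,M\in\mathbb{R}^{n\times n}$ with $M$ nonsingular, $B\in\mathbb{R}^{n\times r}$, and shifts $\alpha_1,\ldots,\alpha_j\in\mathbb{C}$ with $\mathrm{Re}(\alpha_i)<0$. Run $j$ steps of the inexact LR-ADI iteration described in the context, producing $v_i,s_i,w_i$ and $Z_j$. Then $$AZ_j=MZ_jT_j+w_jg_j^*-S_j\Gamma_j,\qquad S_j:=[s_1,\ldots,s_j],$$ where $T_j=\tilde T_j\otimes I_r$ with $\tilde T_j\in\mathbb{C}^{j\times j}$ lower triangular, $(\tilde T_j)_{ii}=\overline{\alpha_i}$, $(\tilde T_j)_{ik}=-\gamma_i\gamma_k$ for $i>k$; $g_j:=[\gamma_1,\ldots,\gamma_j]^T\otimes I_r$; and $\Gamma_j:=\mathrm{diag}(\gamma_1,\ldots,\gamma_j)\otimes I_r$. Moreover, $$AZ_jZ_j^*M^*+MZ_jZ_j^*A^*+BB^*=-S_j\Gamma_jZ_j^*M^*-MZ_j\Gamma_jS_j^*+w_jw_j^*.$$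
   Context: Inexact LR-ADI iteration: $w_0:=B$, $\gamma_i:=\sqrt{-2\,\mathrm{Re}(\alpha_i)}$; for $i=1,\ldots,j$, $v_i\in\mathbb{C}^{n\times r}$ is an arbitrary (approximate) solution of $(A+\alpha_iM)v=w_{i-1}$ with residual $s_i:=w_{i-1}-(A+\alpha_iM)v_i$, and $w_i:=w_{i-1}+\gamma_i^2Mv_i$; $Z_j:=[\gamma_1v_1,\ldots,\gamma_jv_j]\in\mathbb{C}^{n\times jr}$. $^*$ is conjugate transpose, $\overline{\alpha}$ complex conjugate, $\otimes$ the Kronecker product. *)

From HB Require Import structures.
From mathcomp Require Import all_boot all_order all_algebra.
From mathcomp Require Export mxtens.
Set Implicit Arguments. Unset Strict Implicit. Unset Printing Implicit Defensive.
Import Order.TTheory GRing.Theory Num.Theory.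
Local Open Scope ring_scope.

(* Complex numbers: an arbitrary numClosedFieldType C (e.g. algC, or R[i]). *)
(* Indices are 0-based: alpha k, v k, s k denote the paper's
   alpha_{k+1}, v_{k+1}, s_{k+1}; w k denotes the paper's w_k. *)

Definition ctmx (C : numClosedFieldType) m n (X : 'M[C]_(m, n)) : 'M[C]_(n, m) :=
  map_mx (fun x => x^*) X^T.

Definition gam (C : numClosedFieldType) (alpha : nat -> C) (k : nat) : C :=
  sqrtC (- 2 * 'Re (alpha k)).

Section LRADI.
Variables (C : numClosedFieldType) (n r : nat).
Variables (A M : 'M[C]_n) (B : 'M[C]_(n, r)) (alpha : nat -> C)
          (v : nat -> 'M[C]_(n, r)).

Fixpoint adi_w (k : nat) : 'M[C]_(n, r) :=
  match k with
  | 0 => B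
  | k'.+1 => adi_w k' + (gam alpha k' ^+ 2) *: (M *m v k')
  end.

Definition adi_s (k : nat) : 'M[C]_(n, r) :=
  adi_w k - (A + alpha k *: M) *m v k.

(* block row [X_1, ..., X_j] = \sum_i e_i^T (x) X_i *)
Definition blockrow (j : nat) (X : nat -> 'M[C]_(n, r)) : 'M[C]_(n, j * r) :=
  \sum_(i < j) castmx (mul1n n, erefl (j * r)) ((delta_mx 0 i : 'rV[C]_j) *t X i).

Definition adi_Z (j : nat) : 'M[C]_(n, j * r) :=
  blockrow j (fun k => gam alpha k *: v k).

Definition adi_S (j : nat) : 'M[C]_(n, j * r) := blockrow j adi_s.

End LRADI.

Section Small.
Variables (C : numClosedFieldType) (alpha : nat -> C) (j r : nat).

Definition Ttilde : 'M[C]_j :=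
  \matrix_(i < j, k < j)
    if i == k then (alpha i)^* else
    if (k < i)%N then - (gam alpha i * gam alpha k) else 0.

Definition adi_T : 'M[C]_(j * r) := Ttilde *t (1%:M : 'M[C]_r).

Definition adi_g : 'M[C]_(j * r, r) :=
  castmx (erefl (j * r), mul1n r)
    ((\col_(i < j) gam alpha i : 'cV[C]_j) *t (1%:M : 'M[C]_r)).

Definition adi_Gamma : 'M[C]_(j * r) :=
  diag_mx (\row_(i < j) gam alpha i) *t (1%:M : 'M[C]_r).
End Small.

(* Column k of the first identity is gamma_k times
     A v_k = conj(alpha_k) M v_k - sum_{i>k} gamma_i^2 M v_i + w_j - s_k,
   which is the definition of s_k once w_j is expanded as
   w_k + sum_{i>=k} gamma_i^2 M v_i and gamma_k^2 = -(alpha_k + conj(alpha_k))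
   is used; gamma_k is real because Re(alpha_k) <= 0.
   For the second identity, T_j + T_j^* = -g_j g_j^* and M Z_j g_j = w_j - B.
   Substituting the first identity into A Z_j (M Z_j)^* + M Z_j (A Z_j)^*, the
   T_j-terms become -(w_j - B)(w_j - B)^*, and together with the g_j-terms and
   B B^* they collapse to w_j w_j^*. *)

From HB Require Import structures.
From mathcomp Require Import all_boot all_order all_algebra.
From mathcomp Require Import ring.
Import Order.TTheory GRing.Theory Num.Theory.
Set Implicit Arguments. Unset Strict Implicit. Unset Printing Implicit Defensive.
Local Open Scope ring_scope.

Section ConjTranspose.
Variable C : numClosedFieldType.

Lemma ctmxE m n (X : 'M[C]_(m, n)) i k : ctmx X i k = (X k i)^*.
Proof. by rewrite !mxE. Qed.

Lemma ctmxM m n p (X : 'M[C]_(m, n)) (Y : 'M[C]_(n, p)) :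
  ctmx (X *m Y) = ctmx Y *m ctmx X.
Proof. by rewrite /ctmx trmx_mul map_mxM. Qed.

Lemma ctmxD m n (X Y : 'M[C]_(m, n)) : ctmx (X + Y) = ctmx X + ctmx Y.
Proof. by rewrite /ctmx linearD map_mxD. Qed.

Lemma ctmxN m n (X : 'M[C]_(m, n)) : ctmx (- X) = - ctmx X.
Proof. by rewrite /ctmx linearN map_mxN. Qed.

Lemma ctmxB m n (X Y : 'M[C]_(m, n)) : ctmx (X - Y) = ctmx X - ctmx Y.
Proof. by rewrite /ctmx linearB map_mxB. Qed.

Lemma ctmxK m n (X : 'M[C]_(m, n)) : ctmx (ctmx X) = X.
Proof. exact: trmxCK. Qed.

Lemma lyapunov_of_residual m n r (X Y R : 'M[C]_(n, m)) (T : 'M[C]_m)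
    (g : 'M[C]_(m, r)) (w B : 'M[C]_(n, r)) :
  Y = X *m T + w *m ctmx g - R ->
  T + ctmx T = - (g *m ctmx g) -> X *m g = w - B ->
  Y *m ctmx X + X *m ctmx Y + B *m ctmx B =
  - (R *m ctmx X) - X *m ctmx R + w *m ctmx w.
Proof.
move=> -> hT hg.
have hTX : X *m T *m ctmx X + X *m ctmx T *m ctmx X = - ((w - B) *m ctmx (w - B)).
  by rewrite -mulmxDl -mulmxDr hT mulmxN mulNmx mulmxA hg -mulmxA -ctmxM hg.
rewrite !(ctmxD, ctmxB, ctmxN, ctmxM, ctmxK).
rewrite !(mulmxDl, mulmxBl, mulmxDr, mulmxBr, mulNmx, mulmxN, mulmxA).
rewrite -[X *m T *m ctmx X](addrK (X *m ctmx T *m ctmx X)) hTX hg.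
rewrite -[w *m ctmx g *m ctmx X]mulmxA -ctmxM hg.
rewrite !(ctmxB, mulmxBl, mulmxBr).
by apply/matrixP => a b; rewrite !mxE; ring.
Qed.

End ConjTranspose.

Section BlockRow.
Variable C : numClosedFieldType.

Lemma mxDE m n (X Y : 'M[C]_(m, n)) i k : (X + Y) i k = X i k + Y i k.
Proof. by rewrite mxE. Qed.

Lemma mxNE m n (X : 'M[C]_(m, n)) i k : (- X) i k = - X i k.
Proof. by rewrite mxE. Qed.

Lemma mxZE m n x (X : 'M[C]_(m, n)) i k : (x *: X) i k = x * X i k.
Proof. by rewrite mxE. Qed.

Lemma cast_mul1n_ord m (i : 'I_m) :
  cast_ord (esym (mul1n m)) i = mxtens_index (ord0 : 'I_1, i).
Proof. exact: val_inj. Qed.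

Lemma sum_mxtens_index j r (F : 'I_(j * r) -> C) :
  \sum_(b < j * r) F b = \sum_(k < j) \sum_(c < r) F (mxtens_index (k, c)).
Proof.
rewrite pair_big /=; apply: reindex.
exists (@mxtens_unindex j r) => [[k c]|b] _; first by rewrite mxtens_indexK.
by rewrite mxtens_unindexK.
Qed.

Lemma sumr_mul_delta r (F : 'I_r -> C) (c : 'I_r) :
  \sum_(c' < r) F c' * (c' == c)%:R = F c.
Proof.
rewrite (bigD1 c) //= eqxx mulr1 big1 ?addr0 // => c' /negbTE ->.
by rewrite mulr0.
Qed.

Lemma blockrowE n r j (X : nat -> 'M[C]_(n, r)) a (k : 'I_j) c :
  blockrow j X a (mxtens_index (k, c)) = X k a c.
Proof.
rewrite /blockrow summxE (bigD1 k) //= big1 => [|i ik];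
  rewrite castmxE /= cast_mul1n_ord cast_ord_id tensmxE mxE.
  by rewrite !eqxx mul1r addr0.
by rewrite [k == i]eq_sym (negbTE ik) andbF mul0r.
Qed.

Lemma eq_blockrow n r j (X Y : nat -> 'M[C]_(n, r)) :
  (forall i, X i = Y i) -> blockrow j X = blockrow j Y.
Proof. by move=> eXY; apply: eq_bigr => i _; rewrite eXY. Qed.

Lemma mulmx_blockrow n m r j (N : 'M[C]_(m, n)) (X : nat -> 'M[C]_(n, r)) :
  N *m blockrow j X = blockrow j (fun k => N *m X k).
Proof.
apply/matrixP => a b; case: (mxtens_indexP b) => k c.
by rewrite blockrowE !mxE; apply: eq_bigr => l _; rewrite blockrowE.
Qed.

Lemma blockrow_mul_tens1 n r j (X : nat -> 'M[C]_(n, r)) (P : 'M[C]_j) a k c :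
  (blockrow j X *m (P *t (1%:M : 'M[C]_r))) a (mxtens_index (k, c)) =
  \sum_(i < j) P i k * X i a c.
Proof.
rewrite mxE sum_mxtens_index; apply: eq_bigr => i _.
under eq_bigr do rewrite blockrowE tensmxE mxE mulrCA.
by rewrite -mulr_sumr sumr_mul_delta mulrC.
Qed.

End BlockRow.

Section Shifts.
Variable C : numClosedFieldType.
Implicit Type alpha : nat -> C.

Lemma gam_sqr alpha k : gam alpha k ^+ 2 = - (alpha k + (alpha k)^*).
Proof. by rewrite /gam sqrtCK ReE mulNr mulrCA mulfV ?mulr1 // pnatr_eq0. Qed.

Lemma conjC_gam alpha k : 'Re (alpha k) <= 0 -> (gam alpha k)^* = gam alpha k.
Proof.
move=> Re_le0; apply: geC0_conj; rewrite sqrtC_ge0 mulNr -mulrN.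
by rewrite mulr_ge0 ?ler0n // oppr_ge0.
Qed.

End Shifts.

Section LRADI.
Variables (C : numClosedFieldType) (n r j : nat).
Variables (A M : 'M[C]_n) (B : 'M[C]_(n, r)) (alpha : nat -> C)
          (v : nat -> 'M[C]_(n, r)).
Hypothesis Re_alpha_le0 : forall k, (k < j)%N -> 'Re (alpha k) <= 0.

Local Notation gamma := (gam alpha).
Local Notation w := (adi_w M B alpha v).
Local Notation Z := (adi_Z alpha v j).
Local Notation T := (adi_T alpha j r).
Local Notation g := (adi_g alpha j r).
Local Notation Gamma := (adi_Gamma alpha j r).

Lemma conjC_gam_ord (k : 'I_j) : (gamma k)^* = gamma k.
Proof. exact/conjC_gam/Re_alpha_le0. Qed.

Lemma adi_gE (i : 'I_j) c' c : g (mxtens_index (i, c')) c = gamma i * (c' == c)%:R.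
Proof. by rewrite castmxE /= cast_mul1n_ord cast_ord_id tensmxE !mxE. Qed.

Lemma blockrow_mul_adi_g (X : nat -> 'M[C]_(n, r)) a c :
  (blockrow j X *m g) a c = \sum_(i < j) gamma i * X i a c.
Proof.
rewrite mxE sum_mxtens_index; apply: eq_bigr => i _.
under eq_bigr do rewrite blockrowE adi_gE mulrCA.
by rewrite -mulr_sumr sumr_mul_delta mulrC.
Qed.

Lemma mul_ctmx_adi_g m (Y : 'M[C]_(m, r)) a (k : 'I_j) c :
  (Y *m ctmx g) a (mxtens_index (k, c)) = gamma k * Y a c.
Proof.
rewrite mxE.
under eq_bigr do rewrite ctmxE adi_gE rmorphM /= rmorph_nat eq_sym mulrCA.
by rewrite -mulr_sumr sumr_mul_delta conjC_gam_ord.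
Qed.

Lemma blockrow_mul_adi_Gamma (X : nat -> 'M[C]_(n, r)) a (k : 'I_j) c :
  (blockrow j X *m Gamma) a (mxtens_index (k, c)) = gamma k * X k a c.
Proof.
rewrite blockrow_mul_tens1 (bigD1 k) //= big1 ?addr0 => [|i /negbTE ik].
  by rewrite !mxE eqxx mulr1n.
by rewrite !mxE ik mulr0n mul0r.
Qed.

Lemma blockrow_mul_adi_T (Y : nat -> 'M[C]_(n, r)) a (k : 'I_j) c :
  (blockrow j (fun i => gamma i *: Y i) *m T) a (mxtens_index (k, c)) =
  gamma k * ((alpha k)^* * Y k a c - \sum_(i < j | (k < i)%N) gamma i ^+ 2 * Y i a c).
Proof.
rewrite blockrow_mul_tens1 (bigD1 k) //= mulrBr; congr (_ + _).
  by rewrite !mxE eqxx mulrCA.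
rewrite mulr_sumr -sumrN big_mkcond [RHS]big_mkcond; apply: eq_bigr => i _ /=.
rewrite !mxE; case: (eqVneq i k) => [-> | ik] /=; first by rewrite ltnn.
by case: ifP => _; [ring | rewrite !mul0r].
Qed.

Lemma ctmx_adi_Gamma : ctmx Gamma = Gamma.
Proof.
apply/matrixP => b b'; case: (mxtens_indexP b) => i c; case: (mxtens_indexP b') => k c'.
rewrite ctmxE !tensmxE !mxE rmorphM /= rmorph_nat [k == i]eq_sym [c' == c]eq_sym.
by case: eqP => [-> | _]; rewrite ?conjC_gam_ord ?mulr0n ?rmorph0.
Qed.

Lemma adi_T_add_ctmx : T + ctmx T = - (g *m ctmx g).
Proof.
apply/matrixP => b b'; case: (mxtens_indexP b) => i c; case: (mxtens_indexP b') => k c'.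
rewrite mxE [in RHS]mxE ctmxE mul_ctmx_adi_g adi_gE !tensmxE !mxE rmorphM /=.
rewrite rmorph_nat [c' == c]eq_sym; case: (eqVneq c c') => [_ | _] /=; last first.
  by rewrite !mulr0 oppr0 addr0.
rewrite !mulr1; case: (eqVneq i k) => [<- | ik].
  by rewrite conjCK -expr2 gam_sqr opprK addrC.
case: (ltngtP i k) => [_ | _ | /val_inj ik0]; last by rewrite ik0 eqxx in ik.
  by rewrite rmorphN rmorphM /= !conjC_gam_ord add0r.
by rewrite rmorph0 addr0 mulrC.
Qed.

Lemma adi_w_split k l : (k <= l)%N ->
  w l = w k + \sum_(i < l | (k <= i)%N) gamma i ^+ 2 *: (M *m v i).
Proof.
elim: l => [|l IHl]; first by rewrite leqn0 => /eqP ->; rewrite big_ord0 addr0.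
rewrite leq_eqVlt => /orP [/eqP <-|].
  by rewrite big1 ?addr0 // => i; rewrite leqNgt ltn_ord.
rewrite ltnS => le_kl /=; rewrite (IHl le_kl) [in RHS]big_mkcond big_ord_recr /=.
by rewrite -big_mkcond le_kl addrA.
Qed.

Lemma mulmx_adi_Z m (N : 'M[C]_(m, n)) :
  N *m Z = blockrow j (fun i => gamma i *: (N *m v i)).
Proof. by rewrite mulmx_blockrow; apply: eq_blockrow => i; rewrite scalemxAr. Qed.

Lemma mulmx_adi_Z_g : M *m Z *m g = w j - B.
Proof.
rewrite (adi_w_split (leq0n j)) addrC addKr mulmx_adi_Z; apply/matrixP => a c.
rewrite blockrow_mul_adi_g summxE; apply: eq_bigr => i _.
by rewrite !mxZE mulrA -expr2.
Qed.

Lemma adi_residual :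
  A *m Z = M *m Z *m T + w j *m ctmx g - adi_S A M B alpha v j *m Gamma.
Proof.
apply/matrixP => a b; case: (mxtens_indexP b) => k c.
rewrite !mulmx_adi_Z blockrowE !mxDE mxNE blockrow_mul_adi_T mul_ctmx_adi_g.
rewrite blockrow_mul_adi_Gamma /adi_s (adi_w_split (ltn_ord k)) /=.
rewrite mulmxDl -scalemxAl !(mxDE, mxNE, mxZE, summxE).
under [X in w k a c + _ + X]eq_bigr do rewrite mxZE.
rewrite gam_sqr; ring.
Qed.

End LRADI.

Theorem theorem3p2 (C : numClosedFieldType) (n r j : nat)
  (A M : 'M[C]_n) (B : 'M[C]_(n, r)) (alpha : nat -> C)
  (v : nat -> 'M[C]_(n, r)) :
  A \is a mxOver Num.real -> M \is a mxOver Num.real ->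
  B \is a mxOver Num.real -> M \in unitmx ->
  (forall k, (k < j)%N -> 'Re (alpha k) < 0) ->
  let Z := adi_Z alpha v j in
  let S := adi_S A M B alpha v j in
  let w := adi_w M B alpha v j in
  let Gm := adi_Gamma alpha j r in
  A *m Z = M *m Z *m adi_T alpha j r + w *m ctmx (adi_g alpha j r) - S *m Gm
  /\
  A *m Z *m ctmx Z *m ctmx M + M *m Z *m ctmx Z *m ctmx A + B *m ctmx B
  = - (S *m Gm *m ctmx Z *m ctmx M) - M *m Z *m Gm *m ctmx S + w *m ctmx w.
Proof.
move=> _ _ _ _ Re_lt0 Z S w Gm.
have Re_le0 k (lt_kj : (k < j)%N) : 'Re (alpha k) <= 0 := ltW (Re_lt0 k lt_kj).
have residual := adi_residual A M B v Re_le0.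
split=> //.
have := lyapunov_of_residual residual (adi_T_add_ctmx r Re_le0)
  (mulmx_adi_Z_g j M B alpha v).
by rewrite !ctmxM (ctmx_adi_Gamma r Re_le0) !mulmxA.
Qed.
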